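(* Let $0<q<1/2$, $p=1-q$, $s=4pq$ (so $0<s<1$), and for integers $z\ge1$ let $$P(z)=1-\sum_{k=0}^{z-1}\left(p^zq^k-q^zp^k\right)\binom{k+z-1}{k}.$$ Then as $z\to+\infty$, $$P(z)\sim\frac{s^z}{\sqrt{\pi(1-s)z}}.$$
   Context: $P(z)$ is the probability of success of a double-spend attack by attackers with relative hash power $q$ after $z$ confirmations by the honest miners. The symbol $\sim$ means that the ratio tends to $1$. *)

From Stdlib Require Import Reals.
From Coquelicot Require Import Coquelicot.
Open Scope R_scope.

(* P(z) = 1 - sum_{k=0}^{z-1} (p^z q^k - q^z p^k) * C(k+z-1, k),  p = 1 - q.
   sum_f_R0 f (z-1) has terms k = 0..z-1 (used for z >= 1 only). *)
Definition P (q : R) (z : nat) : R :=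
  let p := 1 - q in
  1 - sum_f_R0 (fun k => (p ^ z * q ^ k - q ^ z * p ^ k) * Binomial.C (k + z - 1) k) (z - 1).

Definition s_of (q : R) : R := 4 * (1 - q) * q.

From Stdlib Require Import Reals Lra Lia.
From Coquelicot Require Import Coquelicot.
Open Scope R_scope.

(* Write p = 1 - q and c_n = C(2n,n)/4^n.  The two halves of the sum in P(m+1) are
   problem-of-points probabilities for the two players, which add up to 1; hence
   P(m+1) = 2 q^(m+1) sum_(k<=m) C(k+m,k) p^k <= 2 q s^m, and Pascal's rule gives
   P(m+1) - P(m+2) = (1-2q) c_(m+1) s^(m+1).  So P(z) is the tail of the series
   (1-2q) sum c_n s^n, and since c_(n+1)/c_n = (2n+1)/(2n+2) increases to 1, the
   tail is squeezed between two geometric series started at (1-2q) c_z s^z.  The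
   Wallis integrals of sin^n give c_n ~ 1/sqrt(pi n), and 1-2q = sqrt(1-s). *)

Definition negbin_sum (y : R) (m : nat) : R :=
  sum_f_R0 (fun k => y ^ k * Binomial.C (k + m) k) m.

Lemma C_nonneg n k : 0 <= Binomial.C n k.
Proof.
  unfold Binomial.C. apply Rmult_le_pos; [apply pos_INR|].
  apply Rlt_le, Rinv_0_lt_compat, Rmult_lt_0_compat; apply INR_fact_lt_0.
Qed.

Lemma C_odd_central m : 2 * Binomial.C (2 * m + 1) (S m) = Binomial.C (2 * S m) (S m).
Proof.
  replace (2 * S m)%nat with (S (2 * m + 1)) by lia.
  rewrite <- pascal by lia.
  rewrite pascal_step1 with (i := m) by lia.
  replace (2 * m + 1 - m)%nat with (S m) by lia.
  ring.
Qed.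

Lemma negbin_sum_nonneg y m : 0 <= y -> 0 <= negbin_sum y m.
Proof.
  intros Hy. apply cond_pos_sum. intros k.
  apply Rmult_le_pos; [apply pow_le; exact Hy | apply C_nonneg].
Qed.

Lemma negbin_sum_succ y m :
  (1 - y) * negbin_sum y (S m)
  = negbin_sum y m + y ^ S m * Binomial.C (2 * S m) (S m) * (/ 2 - y).
Proof.
  unfold negbin_sum.
  set (T := sum_f_R0 (fun k => y ^ k * Binomial.C (k + S m) k) (S m)).
  set (A := sum_f_R0 (fun j => y ^ S j * Binomial.C (S j + m) (S j)) m).
  set (B := sum_f_R0 (fun j => y ^ j * Binomial.C (j + S m) j) m).
  assert (Hpascal : T = 1 + A + y * B).
  { unfold T. rewrite decomp_sum by lia. simpl pred. rewrite C_n_0, Rplus_assoc.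
    unfold A, B. rewrite scal_sum, <- plus_sum. f_equal; [ring|].
    apply sum_eq. intros j _.
    replace (S j + S m)%nat with (S (j + S m)) by lia.
    rewrite <- pascal by lia. replace (j + S m)%nat with (S j + m)%nat by lia.
    simpl. ring. }
  assert (HA : A = sum_f_R0 (fun k => y ^ k * Binomial.C (k + m) k) m
                   + y ^ S m * Binomial.C (2 * m + 1) (S m) - 1).
  { assert (E := decomp_sum (fun k => y ^ k * Binomial.C (k + m) k) (S m) ltac:(lia)).
    rewrite tech5 in E. cbv beta in E. simpl pred in E. rewrite pow_O, C_n_0 in E.
    replace (S m + m)%nat with (2 * m + 1)%nat in E by lia.
    unfold A. lra. }
  assert (HB : B = T - y ^ S m * Binomial.C (2 * S m) (S m)).
  { unfold T. rewrite tech5. replace (S m + S m)%nat with (2 * S m)%nat by lia.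
    unfold B. ring. }
  rewrite HA, HB, <- C_odd_central in Hpascal. rewrite <- C_odd_central.
  replace ((1 - y) * T) with (T - y * T) by ring.
  rewrite Hpascal at 1. field.
Qed.

(* For x + y = 1: the probability that the player winning each round with
   probability x is the first to win m+1 rounds. *)
Definition points (x y : R) (m : nat) : R := x ^ S m * negbin_sum y m.

Lemma points_0 x y : points x y 0 = x.
Proof. unfold points, negbin_sum. simpl. rewrite C_n_0. ring. Qed.

Lemma points_succ x y m : x + y = 1 ->
  points x y (S m) = points x y m + (x * y) ^ S m * Binomial.C (2 * S m) (S m) * (/ 2 - y).
Proof.
  intros Hxy. unfold points.
  replace (x ^ S (S m) * negbin_sum y (S m))
    with (x ^ S m * ((1 - y) * negbin_sum y (S m)))
    by (replace (1 - y) with x by lra; simpl; ring).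
  rewrite negbin_sum_succ, Rpow_mult_distr. ring.
Qed.

Lemma points_complement x y m : x + y = 1 -> points x y m + points y x m = 1.
Proof.
  intros Hxy. induction m as [|m IH].
  - rewrite !points_0. exact Hxy.
  - rewrite points_succ, points_succ, (Rmult_comm y x) by lra.
    replace (/ 2 - x) with (y - / 2) by lra. lra.
Qed.

Lemma points_nonneg x y m : 0 <= x -> 0 <= y -> 0 <= points x y m.
Proof.
  intros Hx Hy. apply Rmult_le_pos; [apply pow_le; exact Hx | apply negbin_sum_nonneg; exact Hy].
Qed.

Lemma negbin_sum_half m : negbin_sum (/ 2) m = 2 ^ m.
Proof.
  assert (H := points_complement (/ 2) (/ 2) m ltac:(lra)). unfold points in H. simpl in H.
  apply Rmult_eq_reg_l with ((/ 2) ^ m); [|apply pow_nonzero; lra].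
  rewrite <- Rpow_mult_distr, Rinv_l, pow1 by lra. lra.
Qed.

Lemma negbin_sum_le y m : / 2 <= y -> negbin_sum y m <= (4 * y) ^ m.
Proof.
  intros Hy.
  replace ((4 * y) ^ m) with ((2 * y) ^ m * negbin_sum (/ 2) m)
    by (rewrite negbin_sum_half, <- Rpow_mult_distr; f_equal; ring).
  unfold negbin_sum. rewrite scal_sum. apply sum_Rle. intros k Hk.
  assert (Hmono : (2 * y) ^ k <= (2 * y) ^ m) by (apply Rle_pow; [lra | exact Hk]).
  assert (Hsplit : y ^ k = (2 * y) ^ k * (/ 2) ^ k)
    by (rewrite <- Rpow_mult_distr; f_equal; field).
  rewrite Hsplit.
  assert (0 <= (/ 2) ^ k * Binomial.C (k + m) k)
    by (apply Rmult_le_pos; [apply pow_le; lra | apply C_nonneg]).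
  nra.
Qed.

Definition cbin (n : nat) : R := Binomial.C (2 * n) n / 4 ^ n.

Definition cbin_ratio (n : nat) : R := (2 * INR n + 1) / (2 * INR n + 2).

Lemma cbin_0 : cbin 0 = 1.
Proof. unfold cbin. simpl. rewrite C_n_0. field. Qed.

Lemma cbin_succ n : cbin (S n) = cbin n * cbin_ratio n.
Proof.
  unfold cbin, cbin_ratio, Binomial.C.
  replace (2 * S n - S n)%nat with (S n) by lia.
  replace (2 * n - n)%nat with n by lia.
  replace (2 * S n)%nat with (S (S (2 * n))) by lia.
  rewrite !fact_simpl, !mult_INR, !S_INR, mult_INR.
  assert (0 <= INR n) by apply pos_INR.
  assert (INR (Factorial.fact n) <> 0) by apply INR_fact_neq_0.
  assert (INR (Factorial.fact (2 * n)) <> 0) by apply INR_fact_neq_0.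
  simpl. field. repeat split; try lra. apply pow_nonzero. lra.
Qed.

Lemma cbin_ratio_bounds n : 0 < cbin_ratio n < 1.
Proof.
  unfold cbin_ratio. assert (0 <= INR n) by apply pos_INR.
  split; [apply Rdiv_lt_0_compat; lra|].
  apply Rmult_lt_reg_r with (2 * INR n + 2); [lra|]. field_simplify; lra.
Qed.

Lemma cbin_ratio_le a b : (a <= b)%nat -> cbin_ratio a <= cbin_ratio b.
Proof.
  intros Hab. apply le_INR in Hab. unfold cbin_ratio.
  assert (0 <= INR a) by apply pos_INR.
  apply Rmult_le_reg_r with ((2 * INR a + 2) * (2 * INR b + 2)); [nra|].
  field_simplify; lra.
Qed.

Lemma cbin_pos n : 0 < cbin n.
Proof.
  induction n as [|n IH]; [rewrite cbin_0; lra|].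
  rewrite cbin_succ. apply Rmult_lt_0_compat; [exact IH | apply cbin_ratio_bounds].
Qed.

Definition wallis_integral (n : nat) : R := RInt (fun x => sin x ^ n) 0 (PI / 2).

Lemma continuous_sin_pow n x : continuous (fun x => sin x ^ n) x.
Proof. apply (ex_derive_continuous (V := R_NormedModule)). auto_derive. exact I. Qed.

Lemma ex_RInt_sin_pow n : ex_RInt (fun x => sin x ^ n) 0 (PI / 2).
Proof.
  apply (ex_RInt_continuous (V := R_CompleteNormedModule)). intros x _.
  apply continuous_sin_pow.
Qed.

Lemma wallis_integral_0 : wallis_integral 0 = PI / 2.
Proof. unfold wallis_integral. simpl. rewrite RInt_const. compute. ring. Qed.

Lemma wallis_integral_1 : wallis_integral 1 = 1.
Proof.
  unfold wallis_integral. apply is_RInt_unique.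
  replace 1 with (minus (- cos (PI / 2)) (- cos 0))
    by (rewrite cos_PI2, cos_0; compute; ring).
  apply (is_RInt_derive (V := R_CompleteNormedModule) (fun x => - cos x)).
  - intros x _. auto_derive; [exact I | ring].
  - intros x _. apply continuous_sin_pow.
Qed.

Lemma wallis_integral_rec n :
  wallis_integral (S (S n)) = (INR n + 1) / (INR n + 2) * wallis_integral n.
Proof.
  assert (Hn : 0 <= INR n) by apply pos_INR.
  assert (Hparts : is_RInt (fun x => (INR n + 2) * sin x ^ S (S n) - (INR n + 1) * sin x ^ n)
                     0 (PI / 2)
                     (minus (- cos (PI / 2) * sin (PI / 2) ^ S n) (- cos 0 * sin 0 ^ S n))).
  { apply (is_RInt_derive (V := R_CompleteNormedModule) (fun x => - cos x * sin x ^ S n)).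
    - intros x _. auto_derive; [exact I|].
      change (match n with 0%nat => 1 | S _ => INR n + 1 end) with (INR (S n)). rewrite S_INR.
      assert (E := sin2_cos2 x). unfold Rsqr in E.
      simpl. match goal with |- ?lhs = ?rhs =>
        assert (Hdiff : lhs - rhs
                        = - (INR n + 1) * sin x ^ n * (sin x * sin x + cos x * cos x - 1))
          by ring end.
      rewrite E in Hdiff. lra.
    - intros x _. apply (ex_derive_continuous (V := R_NormedModule)). auto_derive. exact I. }
  replace (minus _ _) with 0 in Hparts
    by (rewrite cos_PI2, sin_0, pow_i by lia; compute; ring).
  assert (Hlin : is_RInt (fun x => (INR n + 2) * sin x ^ S (S n) - (INR n + 1) * sin x ^ n)
                   0 (PI / 2)
                   ((INR n + 2) * wallis_integral (S (S n)) - (INR n + 1) * wallis_integral n)).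
  { apply (is_RInt_minus (V := R_NormedModule)); apply (is_RInt_scal (V := R_NormedModule));
      apply (RInt_correct (V := R_CompleteNormedModule)), ex_RInt_sin_pow. }
  assert (E := is_RInt_unique _ _ _ _ Hparts). rewrite (is_RInt_unique _ _ _ _ Hlin) in E.
  apply Rmult_eq_reg_l with (INR n + 2); [|lra].
  field_simplify; lra.
Qed.

Lemma wallis_integral_succ_le n : wallis_integral (S n) <= wallis_integral n.
Proof.
  assert (Hpi := PI_RGT_0).
  apply RInt_le; [lra | apply ex_RInt_sin_pow | apply ex_RInt_sin_pow |].
  intros x Hx.
  assert (0 <= sin x <= 1) by (split; [apply sin_ge_0 | apply SIN_bound]; lra).
  assert (0 <= sin x ^ n) by (apply pow_le; lra).
  simpl. nra.
Qed.

Lemma wallis_integral_even n : wallis_integral (2 * n) = cbin n * (PI / 2).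
Proof.
  induction n as [|n IH]; [rewrite cbin_0, Rmult_1_l; exact wallis_integral_0|].
  replace (2 * S n)%nat with (S (S (2 * n))) by lia.
  rewrite wallis_integral_rec, IH, cbin_succ, mult_INR.
  unfold cbin_ratio. simpl INR. field. assert (0 <= INR n) by apply pos_INR. lra.
Qed.

Lemma wallis_integral_odd n : (2 * INR n + 1) * cbin n * wallis_integral (2 * n + 1) = 1.
Proof.
  induction n as [|n IH].
  { change (2 * 0 + 1)%nat with 1%nat. rewrite cbin_0, wallis_integral_1. simpl. ring. }
  transitivity ((2 * INR n + 1) * cbin n * wallis_integral (2 * n + 1)); [|exact IH].
  replace (2 * S n + 1)%nat with (S (S (2 * n + 1))) by lia.
  rewrite wallis_integral_rec, cbin_succ, S_INR, plus_INR, mult_INR.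
  unfold cbin_ratio. simpl INR. field. assert (0 <= INR n) by apply pos_INR. split; lra.
Qed.

Lemma wallis_bounds n : 2 * INR n / (2 * INR n + 1) <= cbin n ^ 2 * PI * INR n <= 1.
Proof.
  assert (Hx : 0 <= INR n) by apply pos_INR.
  assert (Ha := cbin_pos n). assert (Hpi := PI_RGT_0).
  assert (Heven := wallis_integral_even n). assert (Heven' := wallis_integral_even (S n)).
  assert (Hodd := wallis_integral_odd n).
  assert (Hle := wallis_integral_succ_le (2 * n)).
  assert (Hle' := wallis_integral_succ_le (2 * n + 1)).
  replace (S (2 * n)) with (2 * n + 1)%nat in Hle by lia.
  replace (S (2 * n + 1)) with (2 * S n)%nat in Hle' by lia.
  rewrite cbin_succ in Heven'. unfold cbin_ratio in Heven'.
  set (x := INR n) in *. set (a := cbin n) in *. set (J := wallis_integral (2 * n + 1)) in *.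
  assert (HJ : J = / ((2 * x + 1) * a)).
  { apply Rmult_eq_reg_l with ((2 * x + 1) * a); [|nra]. rewrite Rinv_r by nra. exact Hodd. }
  rewrite Heven, HJ in Hle. rewrite Heven', HJ in Hle'.
  assert (Hlow : 2 <= (2 * x + 1) * (a ^ 2 * PI)).
  { apply Rmult_le_compat_l with (r := (2 * x + 1) * a) in Hle; [|nra].
    field_simplify in Hle; [|lra..]. nra. }
  assert (Hup : a ^ 2 * PI * (2 * x + 1) ^ 2 <= 4 * (x + 1)).
  { apply Rmult_le_compat_l with (r := (2 * x + 1) * a * (2 * x + 2)) in Hle'; [|nra].
    field_simplify in Hle'; [|lra..]. nra. }
  split.
  - apply Rmult_le_reg_r with (2 * x + 1); [lra|]. field_simplify; [nra | lra].
  - nra.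
Qed.

Lemma is_lim_seq_inv_affine (a b : R) : 0 < a -> 0 <= b ->
  is_lim_seq (fun n => / (a * INR n + b)) 0.
Proof.
  intros Ha Hb.
  replace (Finite 0) with (Rbar_inv p_infty) by reflexivity.
  apply is_lim_seq_inv; [|discriminate].
  apply is_lim_seq_le_p_loc with (fun n => a * INR n).
  - exists 0%nat. intros n _. lra.
  - replace p_infty with (Rbar_mult a p_infty).
    + apply is_lim_seq_scal_l, is_lim_seq_INR.
    + simpl. destruct (Rle_dec 0 a) as [H|]; [|lra].
      destruct (Rle_lt_or_eq_dec 0 a H); [reflexivity | lra].
Qed.

Lemma is_lim_seq_one_sub_inv_affine (a b : R) : 0 < a -> 0 <= b ->
  is_lim_seq (fun n => 1 - / (a * INR n + b)) 1.
Proof.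
  intros Ha Hb. replace (Finite 1) with (Finite (1 - 0)) by (f_equal; ring).
  apply is_lim_seq_minus'; [apply is_lim_seq_const | apply is_lim_seq_inv_affine; assumption].
Qed.

Lemma is_lim_seq_cbin_ratio : is_lim_seq cbin_ratio 1.
Proof.
  apply is_lim_seq_ext with (fun n => 1 - / (2 * INR n + 2));
    [|apply is_lim_seq_one_sub_inv_affine; lra].
  intros n. unfold cbin_ratio. field. assert (0 <= INR n) by apply pos_INR. lra.
Qed.

Lemma is_lim_seq_cbin_sqrt : is_lim_seq (fun n => cbin n * sqrt (PI * INR n)) 1.
Proof.
  apply is_lim_seq_le_le with (u := fun n => 1 - / (2 * INR n + 1)) (w := fun _ => 1);
    [|apply is_lim_seq_one_sub_inv_affine; lra | apply is_lim_seq_const].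
  intros n.
  assert (Hx : 0 <= INR n) by apply pos_INR. assert (Hpi := PI_RGT_0).
  assert (Hbounds := wallis_bounds n). assert (Ha := cbin_pos n).
  assert (Hsq : 0 <= sqrt (PI * INR n)) by apply sqrt_pos.
  assert (Hsq2 : sqrt (PI * INR n) ^ 2 = PI * INR n) by (apply pow2_sqrt; nra).
  set (w := cbin n * sqrt (PI * INR n)).
  assert (Hw2 : w ^ 2 = cbin n ^ 2 * PI * INR n)
    by (unfold w; rewrite Rpow_mult_distr, Hsq2; ring).
  assert (0 <= w) by (unfold w; nra).
  assert (w <= 1) by nra.
  replace (1 - / (2 * INR n + 1)) with (2 * INR n / (2 * INR n + 1)) by (field; lra).
  split; nra.
Qed.

Lemma tail_le_of_ratio_le (u d : nat -> R) (rho : R) (m : nat) :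
  is_lim_seq u 0 -> (forall n, u n - u (S n) = d n) -> rho < 1 ->
  (forall n, (m <= n)%nat -> d (S n) <= rho * d n) ->
  u m <= d m / (1 - rho).
Proof.
  intros Hu Hd Hrho Hratio.
  assert (Hd0 : is_lim_seq d 0).
  { apply is_lim_seq_ext with (fun n => u n - u (S n)); [exact Hd|].
    replace 0 with (0 - 0) by ring.
    apply is_lim_seq_minus'; [exact Hu | apply (is_lim_seq_incr_1 u 0), Hu]. }
  set (v := fun n => u (n + m)%nat - d (n + m)%nat / (1 - rho)).
  assert (Hv : is_lim_seq v 0).
  { replace 0 with (0 - 0 / (1 - rho)) by (field; lra).
    apply is_lim_seq_minus'; [apply (is_lim_seq_incr_n u m 0), Hu|].
    apply (is_lim_seq_div' (fun n => d (n + m)%nat) (fun _ => 1 - rho));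
      [apply (is_lim_seq_incr_n d m 0), Hd0 | apply is_lim_seq_const | lra]. }
  assert (Hmono : forall n, v n <= v (S n)).
  { intros n. unfold v. replace (S n + m)%nat with (S (n + m)) by lia.
    assert (H := Hratio (n + m)%nat ltac:(lia)). rewrite <- (Hd (n + m)%nat) in H |- *.
    apply Rmult_le_reg_r with (1 - rho); [lra|].
    field_simplify; [nra | lra..]. }
  assert (H := is_lim_seq_incr_compare v 0 Hv Hmono 0). unfold v in H. simpl in H.
  lra.
Qed.

Lemma tail_ge_of_ratio_ge (u d : nat -> R) (rho : R) (m : nat) :
  is_lim_seq u 0 -> (forall n, u n - u (S n) = d n) -> rho < 1 ->
  (forall n, (m <= n)%nat -> rho * d n <= d (S n)) ->
  d m / (1 - rho) <= u m.
Proof.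
  intros Hu Hd Hrho Hratio.
  assert (H := tail_le_of_ratio_le (fun n => - u n) (fun n => - d n) rho m).
  cbv beta in H.
  assert (- u m <= - d m / (1 - rho)); [|unfold Rdiv in *; lra].
  apply H; [| intros n; rewrite <- Hd; ring | exact Hrho |
             intros n Hn; specialize (Hratio n Hn); lra].
  replace (Finite 0) with (Rbar_opp 0) by (simpl; f_equal; ring).
  apply -> is_lim_seq_opp. exact Hu.
Qed.

Lemma one_sub_s_of q : 1 - s_of q = (1 - 2 * q) ^ 2.
Proof. unfold s_of. ring. Qed.

Lemma P_succ q m : P q (S m) = 1 - (points (1 - q) q m - points q (1 - q) m).
Proof.
  unfold P, points, negbin_sum. cbv zeta. replace (S m - 1)%nat with m by lia.
  rewrite !scal_sum, <- minus_sum. f_equal. apply sum_eq. intros k _.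
  replace (k + S m - 1)%nat with (k + m)%nat by lia. ring.
Qed.

Lemma P_succ_points q m : P q (S m) = 2 * points q (1 - q) m.
Proof.
  rewrite P_succ. assert (H := points_complement (1 - q) q m ltac:(lra)). lra.
Qed.

Lemma P_succ_sub q m :
  P q (S m) - P q (S (S m)) = (1 - 2 * q) * cbin (S m) * s_of q ^ S m.
Proof.
  rewrite !P_succ_points, points_succ by lra.
  unfold cbin, s_of. rewrite !Rpow_mult_distr.
  field. apply pow_nonzero. lra.
Qed.

Section DoubleSpend.

Variable q : R.
Hypothesis Hq : 0 < q < 1 / 2.

Lemma s_of_bounds : 0 < s_of q < 1.
Proof. unfold s_of. split; nra. Qed.

Lemma is_lim_seq_P_succ : is_lim_seq (fun m => P q (S m)) 0.
Proof.
  assert (Hs := s_of_bounds).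
  apply is_lim_seq_le_le with (u := fun _ => 0) (w := fun m => 2 * q * s_of q ^ m).
  - intros m. rewrite P_succ_points. split.
    + assert (H := points_nonneg q (1 - q) m ltac:(lra) ltac:(lra)). lra.
    + unfold points, s_of. rewrite Rpow_mult_distr. simpl (q ^ S m).
      assert (H := negbin_sum_le (1 - q) m ltac:(lra)).
      assert (0 <= q * q ^ m) by (apply Rmult_le_pos; [|apply pow_le]; lra).
      nra.
  - apply is_lim_seq_const.
  - replace (Finite 0) with (Rbar_mult (2 * q) 0) by (simpl; f_equal; ring).
    apply is_lim_seq_scal_l, is_lim_seq_geom. rewrite Rabs_pos_eq; lra.
Qed.

Lemma P_succ_sub_nonneg m : 0 <= (1 - 2 * q) * cbin (S m) * s_of q ^ S m.
Proof.
  assert (Hs := s_of_bounds). assert (Ha := cbin_pos (S m)).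
  assert (0 < s_of q ^ S m) by (apply pow_lt; lra).
  apply Rmult_le_pos; nra.
Qed.

Lemma P_succ_sub_succ m :
  (1 - 2 * q) * cbin (S (S m)) * s_of q ^ S (S m)
  = cbin_ratio (S m) * s_of q * ((1 - 2 * q) * cbin (S m) * s_of q ^ S m).
Proof. rewrite (cbin_succ (S m)). simpl. ring. Qed.

Lemma P_succ_le m :
  P q (S m) <= (1 - 2 * q) * cbin (S m) * s_of q ^ S m / (1 - s_of q).
Proof.
  assert (Hs := s_of_bounds).
  apply (tail_le_of_ratio_le (fun m => P q (S m))
           (fun m => (1 - 2 * q) * cbin (S m) * s_of q ^ S m));
    [exact is_lim_seq_P_succ | intro; apply P_succ_sub | lra |].
  intros n _. rewrite P_succ_sub_succ.
  assert (Hr := cbin_ratio_bounds (S n)). assert (Hd := P_succ_sub_nonneg n).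
  apply Rmult_le_compat_r; [exact Hd | nra].
Qed.

Lemma P_succ_ge m :
  (1 - 2 * q) * cbin (S m) * s_of q ^ S m / (1 - cbin_ratio (S m) * s_of q) <= P q (S m).
Proof.
  assert (Hs := s_of_bounds). assert (Hr := cbin_ratio_bounds (S m)).
  apply (tail_ge_of_ratio_ge (fun m => P q (S m))
           (fun m => (1 - 2 * q) * cbin (S m) * s_of q ^ S m));
    [exact is_lim_seq_P_succ | intro; apply P_succ_sub | nra |].
  intros n Hn. rewrite P_succ_sub_succ.
  assert (Hmono := cbin_ratio_le (S m) (S n) ltac:(lia)). assert (Hd := P_succ_sub_nonneg n).
  apply Rmult_le_compat_r; [exact Hd | nra].
Qed.

Lemma sqrt_PI_one_sub_s_of z : 0 <= z ->
  sqrt (PI * (1 - s_of q) * z) = (1 - 2 * q) * sqrt (PI * z).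
Proof.
  intros Hz. rewrite one_sub_s_of.
  replace (PI * (1 - 2 * q) ^ 2 * z) with ((1 - 2 * q) ^ 2 * (PI * z)) by ring.
  rewrite sqrt_mult_alt, sqrt_pow2; [reflexivity | lra | apply pow2_ge_0].
Qed.

Lemma P_succ_ratio_bounds m :
  let w := cbin (S m) * sqrt (PI * INR (S m)) in
  w * ((1 - s_of q) / (1 - cbin_ratio (S m) * s_of q))
  <= P q (S m) / (s_of q ^ S m / sqrt (PI * (1 - s_of q) * INR (S m)))
  <= w.
Proof.
  intros w. assert (Hs := s_of_bounds). assert (Hr := cbin_ratio_bounds (S m)).
  assert (Hx : 0 < INR (S m)) by apply lt_0_INR, Nat.lt_0_succ.
  assert (Hroot : 0 < sqrt (PI * INR (S m)))
    by (apply sqrt_lt_R0, Rmult_lt_0_compat; [apply PI_RGT_0 | exact Hx]).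
  assert (Ht : 0 < s_of q ^ S m) by (apply pow_lt; lra).
  assert (Hle := P_succ_le m). assert (Hge := P_succ_ge m).
  rewrite sqrt_PI_one_sub_s_of by lra. rewrite one_sub_s_of in *.
  unfold w. set (a := cbin (S m)) in *. set (R := sqrt (PI * INR (S m))) in *.
  set (t := s_of q ^ S m) in *. set (r := cbin_ratio (S m)) in *.
  replace (P q (S m) / (t / ((1 - 2 * q) * R))) with (P q (S m) * ((1 - 2 * q) * R / t))
    by (field; lra).
  assert (Hk : 0 < (1 - 2 * q) * R / t) by (apply Rdiv_lt_0_compat; [nra | lra]).
  split.
  - apply Rle_trans with ((1 - 2 * q) * a * t / (1 - r * s_of q) * ((1 - 2 * q) * R / t)).
    + right. field. split; nra.
    + apply Rmult_le_compat_r; lra.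
  - apply Rle_trans with ((1 - 2 * q) * a * t / (1 - 2 * q) ^ 2 * ((1 - 2 * q) * R / t)).
    + apply Rmult_le_compat_r; lra.
    + right. field. lra.
Qed.

End DoubleSpend.

Theorem mainTheorem4 (q : R) (hq0 : 0 < q) (hq1 : q < 1 / 2) :
  is_lim_seq
    (fun z : nat =>
       P q z / (s_of q ^ z / sqrt (PI * (1 - s_of q) * INR z)))
    1.
Proof.
  assert (Hq : 0 < q < 1 / 2) by (split; assumption).
  assert (Hs := s_of_bounds q Hq).
  assert (Hwallis : is_lim_seq (fun m => cbin (S m) * sqrt (PI * INR (S m))) 1)
    by apply (is_lim_seq_incr_1 (fun n => cbin n * sqrt (PI * INR n))), is_lim_seq_cbin_sqrt.
  assert (Hfactor : is_lim_seq (fun m => (1 - s_of q) / (1 - cbin_ratio (S m) * s_of q)) 1).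
  { replace (Finite 1) with (Finite ((1 - s_of q) / (1 - 1 * s_of q))) by (f_equal; field; lra).
    apply is_lim_seq_div'; [apply is_lim_seq_const | | lra].
    apply is_lim_seq_minus'; [apply is_lim_seq_const|].
    apply is_lim_seq_scal_r with (lu := Finite 1).
    apply (is_lim_seq_incr_1 cbin_ratio), is_lim_seq_cbin_ratio. }
  apply is_lim_seq_incr_1.
  apply is_lim_seq_le_le with
    (u := fun m => cbin (S m) * sqrt (PI * INR (S m))
                   * ((1 - s_of q) / (1 - cbin_ratio (S m) * s_of q)))
    (w := fun m => cbin (S m) * sqrt (PI * INR (S m))).
  - intros m. apply (P_succ_ratio_bounds q Hq m).
  - replace (Finite 1) with (Finite (1 * 1)) by (f_equal; ring).
    apply is_lim_seq_mult'; assumption.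
  - exact Hwallis.
Qed.
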